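(* For $E \in \Delta_{\mathbb{F}}^{\mathrm{el}}$, the map $E \to \tau^*(\tau E)$ in $\mathcal{P}(\Delta_{\mathbb{F}}^1)$ is an equivalence.
   Context: $\Delta_{\mathbb{F}}^1$ is the full subcategory of Barwick's category $\Delta_{\mathbb{F}}$ (objects $([n], f\colon[n]\to\mathbb{F})$ with $\mathbb{F}$ finite sets; morphisms $(\phi,\eta)$ with $\eta\colon f\to g\circ\phi$ having injective components and pullback naturality squares) on objects with $f(n)=\mathbf{1}$. $\Delta_{\mathbb{F}}^{\mathrm{el}}$ consists of the objects $([1],\mathbf{k}\to\mathbf{1})$, $k\ge0$, and $([0],\mathbf{1})$. $\tau\colon\Delta_{\mathbb{F}}^1\to\Omega$ (dendroidal category) sends $([n],f)$ to the tree with edges $\coprod_{i=0}^n f(i)$, vertices $\coprod_{i=1}^n f(i)$, the edge $x\in f(i)$ ($i<n$) entering vertex $f^{i(i+1)}(x)$; thus $\tau([0],\mathbf{1})$ is the edge $\eta$ and $\tau([1],\mathbf{k}\to\mathbf{1})$ is the corolla $C_k$. $\mathcal{P}(-)$ denotes presheaves of spaces; objects are viewed as presheaves via Yoneda, and $\tau^*$ is restriction along $\tau$; the map is the unit $E\to\tau^*\tau_!E$. *)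

From mathcomp Require Import all_boot.
Set Implicit Arguments. Unset Strict Implicit. Unset Printing Implicit Defensive.

(* An object ([n], f : [n] -> F) is encoded (up to isomorphism) as a   *)
(* finite set dT of "elements", each lying over a level in [n] = 'I_n.+1 *)
(* (the level-i fibre is f(i)), together with the successor map        *)
(* dnxt, which on level i < n is f^{i(i+1)} : f(i) -> f(i+1).          *)
(* The value of dnxt on level n is irrelevant (never used).            *)
(* dtop : f(n) is a one-element set (f(n) = 1).                        *)
Record DObj := {
  dn : nat;
  dT : finType;
  dlev : dT -> 'I_dn.+1;
  dnxt : dT -> dT;
  dnxt_lev : forall x, (dlev x < dn)%N -> nat_of_ord (dlev (dnxt x)) = (dlev x).+1;
  dtop : #|[pred x | nat_of_ord (dlev x) == dn]| = 1
}.

(* f^{ij}(x) for x in f(i), i <= j : iterate the successor map j - i times *)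
Definition dmap (X : DObj) (k : nat) (x : dT X) : dT X := iter k (@dnxt X) x.

(* Morphisms (phi, eta) : ([n],f) -> ([m],g) of Delta_F:
   phi : [n] -> [m] order preserving, eta : f => g o phi a natural
   transformation with injective components and cartesian (pullback)
   naturality squares.  eta is given as a single map on elements, whose
   restriction to level i is the component eta_i : f(i) -> g(phi i). *)
Definition is_dmorph (X Y : DObj) (phi : 'I_(dn X).+1 -> 'I_(dn Y).+1)
  (eta : dT X -> dT Y) : Prop :=
  [/\
      (forall i j : 'I_(dn X).+1, (i <= j)%N -> (phi i <= phi j)%N),
      (forall x, dlev (eta x) = phi (dlev x)),
      (forall x y, dlev x = dlev y -> eta x = eta y -> x = y),
      (forall (x : dT X) (j : 'I_(dn X).+1), (dlev x <= j)%N ->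
         eta (dmap (j - dlev x) x) = dmap (phi j - phi (dlev x)) (eta x))
    & (* the naturality squares are pullbacks:
         f(i) -> f(j) x_{g(phi j)} g(phi i) is a bijection *)
      (forall i j : 'I_(dn X).+1, (i <= j)%N ->
         forall (y : dT Y) (z : dT X), dlev y = phi i -> dlev z = j ->
           dmap (phi j - phi i) y = eta z ->
           exists! x : dT X, [/\ dlev x = i, eta x = y & dmap (j - i) x = z])].

Record DHom (X Y : DObj) := {
  dh_phi : 'I_(dn X).+1 -> 'I_(dn Y).+1;
  dh_eta : dT X -> dT Y;
  dh_ok : is_dmorph dh_phi dh_eta
}.

Record tree := {
  tE : finType;
  tV : finType;
  tout : tV -> tE;
  tin : tV -> {set tE}
}.

(* Operations of the free coloured operad Omega(T): there is exactly one
   operation with (necessarily distinct) inputs S and output e iff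
   (S ; e) is obtained from identities and the generating vertices by
   operadic composition; op T S e expresses that such an operation exists. *)
Inductive op (T : tree) : {set tE T} -> tE T -> Prop :=
| op_id (e : tE T) : op [set e] e
| op_comp (v : tV T) (S : tE T -> {set tE T}) :
    (forall a, a \in tin v -> op (S a) a) ->
    op (\bigcup_(a in tin v) S a) (tout v).

(* Morphisms S -> T in Omega = maps of coloured operads Omega(S) -> Omega(T).
   Since Omega(T) has at most one operation per profile, such a map is the
   same as a map on edges sending each generating vertex of S to an
   operation of Omega(T), i.e. injective on the inputs of every vertex v and
   with an operation (f(in v) ; f(out v)) in Omega(T). *)
Definition is_omap (S T : tree) (f : tE S -> tE T) : Prop :=
  forall v : tV S, {in tin v &, injective f} /\ op (f @: tin v) (f (tout v)).

Record OHom (S T : tree) := {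
  oh_fun : tE S -> tE T;
  oh_ok : is_omap oh_fun
}.

(* Edges: all elements (coprod_{i=0}^n f(i)); vertices: elements of    *)
(* level >= 1 (coprod_{i=1}^n f(i)); the vertex v in f(i) has output   *)
(* edge v in f(i) and inputs the edges x in f(i-1) with f^{(i-1)i}(x)=v. *)
Definition tau_vert (X : DObj) := {x : dT X | (0 < dlev x)%N}.

Definition tau (X : DObj) : tree :=
  {| tE := dT X;
     tV := tau_vert X;
     tout := fun v => val v;
     tin := fun v => [set x | ((dlev x < dn X)%N && (dnxt x == val v))] |}.

(* On morphisms, tau (phi, eta) is the edge map eta. *)

(* Elementary objects: ([0], 1) and ([1], k -> 1).                     *)
Section Elementary.

Lemma eta_obj_lev (x : unit) :
  ((fun _ : unit => (ord0 : 'I_1)) x < 0)%N ->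
  nat_of_ord ((fun _ : unit => (ord0 : 'I_1)) tt) = ((fun _ : unit => (ord0 : 'I_1)) x).+1.
Proof. by []. Qed.

Lemma eta_obj_top : #|[pred x : unit | nat_of_ord (ord0 : 'I_1) == 0%N]| = 1.
Proof. by rewrite (eq_card (B := predT)) // card_unit. Qed.

Definition eta_obj : DObj :=
  {| dn := 0; dT := unit; dlev := fun _ => ord0; dnxt := fun _ => tt;
     dnxt_lev := eta_obj_lev; dtop := eta_obj_top |}.

Definition cor_lev (k : nat) (x : option 'I_k) : 'I_2 :=
  if x is Some _ then ord0 else ord_max.

Lemma cor_obj_lev (k : nat) (x : option 'I_k) :
  (cor_lev x < 1)%N -> nat_of_ord (cor_lev (None : option 'I_k)) = (cor_lev x).+1.
Proof. by case: x. Qed.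

Lemma cor_obj_top (k : nat) :
  #|[pred x : option 'I_k | nat_of_ord (cor_lev x) == 1%N]| = 1.
Proof.
rewrite (eq_card (B := pred1 None)) ?card1 // => x.
by case: x.
Qed.

Definition cor_obj (k : nat) : DObj :=
  {| dn := 1; dT := option 'I_k; dlev := @cor_lev k; dnxt := fun _ => None;
     dnxt_lev := @cor_obj_lev k; dtop := cor_obj_top k |}.

End Elementary.

Inductive elementary : DObj -> Prop :=
| el_eta : elementary eta_obj
| el_cor (k : nat) : elementary (cor_obj k).

(* The component at X of the unit E -> tau^* tau_! E = tau^*(tau E) is the
   map Hom(X, E) -> Hom_Omega(tau X, tau E), (phi, eta) |-> eta.
   It is an equivalence of (discrete) spaces iff it is a bijection; we
   state that it is well defined and bijective. *)
Definition unit_component_bijective (X E : DObj) : Prop :=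
  (forall f : DHom X E, is_omap (S := tau X) (T := tau E) (dh_eta f)) /\
  (forall g : OHom (tau X) (tau E),
      exists! f : DHom X E, dh_eta f =1 oh_fun g).

From mathcomp Require Import all_boot zify.
From Stdlib Require Import FunctionalExtensionality ProofIrrelevance.
Set Implicit Arguments. Unset Strict Implicit. Unset Printing Implicit Defensive.

(* Only [dn E <= 1] matters: then [tau E] is an edge or a corolla, and its
   operad has, besides identities, only the operation given by the corolla.
   So an operad map [g : tau X -> tau E] sends the inputs of a vertex either
   all to the image of its output, or bijectively onto the leaves of [E] while
   the output goes to the root. Descending from the top of [X], the elements
   sent to the root form a chain of singleton levels, [g] is injective on
   every level, and the levels mapped to the root determine [phi]; the
   pullback condition is the descent of elements and their labels along the
   fibres. Conversely a morphism of [Delta_F] into [E] satisfies the same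
   vertex dichotomy, so its edge map is an operad map. *)

Section DObjFacts.

Variable X : DObj.

Lemma dlev_le (x : dT X) : (dlev x <= dn X)%N.
Proof. by rewrite -ltnS ltn_ord. Qed.

Lemma dtop_exists : exists t : dT X, nat_of_ord (dlev t) = dn X.
Proof.
have /eqP/card1P [t Ht] := dtop X; exists t.
by have := Ht t; rewrite !inE eqxx => /eqP.
Qed.

Lemma dtop_unique (x y : dT X) :
  nat_of_ord (dlev x) = dn X -> nat_of_ord (dlev y) = dn X -> x = y.
Proof.
have /eqP/card1P [t Ht] := dtop X; move=> Hx Hy.
have := Ht x; have := Ht y; rewrite !inE Hx Hy eqxx /=.
by move=> /esym/eqP -> /esym/eqP ->.
Qed.

Lemma dobj_down_ind (P : dT X -> Prop) :
  (forall x, nat_of_ord (dlev x) = dn X -> P x) ->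
  (forall x, (dlev x < dn X)%N -> P (dnxt x) -> P x) -> forall x, P x.
Proof.
move=> Ptop Pnxt x; move Em: (dn X - dlev x) => m.
elim: m x Em => [|m IH] x Hm; first by apply: Ptop; have := dlev_le x; lia.
have Hlt : (dlev x < dn X)%N by lia.
by apply: Pnxt => //; apply: IH; rewrite (dnxt_lev Hlt); lia.
Qed.

Lemma dmapS m (x : dT X) : dmap m.+1 x = dnxt (dmap m x).
Proof. exact: iterS. Qed.

Lemma dlev_dmap m (x : dT X) :
  (dlev x + m <= dn X)%N -> nat_of_ord (dlev (dmap m x)) = (dlev x + m)%N.
Proof.
elim: m => [|m IH] Hm; first by rewrite addn0.
by rewrite dmapS dnxt_lev IH //; lia.
Qed.

Lemma dlev_dnxt_gt0 (x : dT X) : (dlev x < dn X)%N -> (0 < dlev (dnxt x))%N.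
Proof. by move=> Hx; rewrite (dnxt_lev Hx). Qed.

Lemma dlev_dnxt_eq (x y : dT X) :
  dlev y = dlev x -> (dlev x < dn X)%N -> dlev (dnxt y) = dlev (dnxt x).
Proof.
move=> Hxy Hx; have Hy : (dlev y < dn X)%N by rewrite Hxy.
by apply: val_inj; rewrite /= (dnxt_lev Hx) (dnxt_lev Hy) Hxy.
Qed.

Lemma dlev_dmap_sub (x : dT X) (j : 'I_(dn X).+1) :
  (dlev x <= j)%N -> dlev (dmap (j - dlev x) x) = j.
Proof. by move=> Hxj; apply: val_inj; rewrite /= dlev_dmap; have := ltn_ord j; lia. Qed.

Definition dvert (z : dT X) (Hz : (0 < dlev z)%N) : tau_vert X := exist _ z Hz.

Lemma mem_tin_dvert (x z : dT X) (Hz : (0 < dlev z)%N) :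
  (x \in @tin (tau X) (dvert Hz)) = (dlev x < dn X)%N && (dnxt x == z).
Proof. by rewrite inE. Qed.

Lemma dlev_tin (v : tau_vert X) (x : dT X) :
  x \in @tin (tau X) v -> nat_of_ord (dlev (val v)) = (dlev x).+1.
Proof. by rewrite inE => /andP[Hx /eqP <-]; rewrite (dnxt_lev Hx). Qed.

End DObjFacts.

Section Shallow.

Variables (E : DObj) (hE : (dn E <= 1)%N).

Lemma shallow_root (e : dT E) : (0 < dlev e)%N -> nat_of_ord (dlev e) = dn E.
Proof. by have := dlev_le e; lia. Qed.

Lemma shallow_dmap_root (a b : dT E) :
  (0 < dlev b)%N -> b = dmap (dlev b - dlev a) a.
Proof.
move=> Hb; have Hbtop := shallow_root Hb.
have [Ha|Ha] := posnP (dlev a).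
  have Hlt : (dlev a < dn E)%N by lia.
  rewrite Ha Hbtop subn0 (_ : dn E = 1%N); last by lia.
  by apply: dtop_unique => //; rewrite /dmap /= dnxt_lev // Ha; lia.
rewrite Hbtop (shallow_root Ha) subnn.
by apply: dtop_unique; apply: shallow_root.
Qed.

Lemma shallow_tin (w : tau_vert E) : @tin (tau E) w = [set a | (dlev a < dn E)%N].
Proof.
apply/setP => a; rewrite !inE; case Ha: (dlev a < dn E)%N => //=.
apply/eqP; apply: dtop_unique; first by rewrite dnxt_lev //; lia.
exact: shallow_root (valP w).
Qed.

Lemma bigcup_tin_set1 (w : tau_vert E) :
  \bigcup_(a in @tin (tau E) w) [set a] = [set a | (dlev a < dn E)%N].
Proof.
rewrite -(shallow_tin w); apply/setP => a; apply/bigcupP/idP.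
  by move=> [b Hb]; rewrite inE => /eqP ->.
by move=> Ha; exists a; rewrite ?set11.
Qed.

Lemma op_shallow_leaves (w : tau_vert E) :
  op (T := tau E) [set a | (dlev a < dn E)%N] (val w).
Proof. by rewrite -(bigcup_tin_set1 w); apply: op_comp => a _; apply: op_id. Qed.

Lemma op_shallow S e : op (T := tau E) S e ->
  S = [set e] \/ (0 < dlev e)%N /\ S = [set a | (dlev a < dn E)%N].
Proof.
elim=> [e'|w S' _ IH]; first by left.
right; split; first exact: valP w.
rewrite -(bigcup_tin_set1 w); apply: eq_bigr => a Ha.
have Hleaf : (dlev a < dn E)%N by move: Ha; rewrite shallow_tin inE.
by case: (IH a Ha) => [//|[Ha0 _]]; have := shallow_root Ha0; lia.
Qed.

End Shallow.

Section OmapToShallow.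

Variables (X E : DObj) (hE : (dn E <= 1)%N) (g : dT X -> dT E).
Hypothesis g_omap : is_omap (S := tau X) (T := tau E) g.

Local Notation rooted x := (0 < dlev (g x))%N.

Lemma omap_image (v : tau_vert X) :
  g @: @tin (tau X) v = [set g (val v)] \/
  rooted (val v) /\ g @: @tin (tau X) v = [set a | (dlev a < dn E)%N].
Proof. by have [_ /(op_shallow hE)] := g_omap v. Qed.

Lemma omap_dnxt (x : dT X) : (dlev x < dn X)%N ->
  g (dnxt x) = g x \/ rooted (dnxt x) /\ ~~ rooted x.
Proof.
move=> Hx; set v := dvert (dlev_dnxt_gt0 Hx).
have Hgx : g x \in g @: @tin (tau X) v by rewrite imset_f // mem_tin_dvert Hx /=.
case: (omap_image v) => [Himg|[Hroot Himg]]; rewrite Himg inE in Hgx.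
  by left; rewrite (eqP Hgx).
by right; split=> //; rewrite -ltnNge; lia.
Qed.

Lemma rooted_dnxt (x : dT X) :
  rooted x -> (dlev x < dn X)%N -> rooted (dnxt x).
Proof. by move=> Hr Hx; case: (omap_dnxt Hx) => [->|[]]. Qed.

Lemma rooted_dmap m (x : dT X) :
  rooted x -> (dlev x + m <= dn X)%N -> rooted (dmap m x).
Proof.
move=> Hx; elim: m => [|m IH] Hm //; rewrite dmapS.
by apply: rooted_dnxt; [apply: IH | rewrite dlev_dmap]; lia.
Qed.

Lemma unrooted_dmap m (x : dT X) :
  (dlev x + m <= dn X)%N -> ~~ rooted (dmap m x) -> g (dmap m x) = g x.
Proof.
elim: m => [|m IH] Hm //; rewrite dmapS => Hroot.
have Hlt : (dlev (dmap m x) < dn X)%N by rewrite dlev_dmap; lia.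
case: (omap_dnxt Hlt) => [Heq|[Hr _]]; last by rewrite Hr in Hroot.
by rewrite Heq; apply: IH; [lia | rewrite -Heq].
Qed.

Lemma omap_sibling_inj (x y : dT X) (Hx : (dlev x < dn X)%N) :
  (dlev y < dn X)%N -> dnxt y = dnxt x -> g y = g x -> y = x.
Proof.
move=> Hy Hnxt Hgxy; have [Hinj _] := g_omap (dvert (dlev_dnxt_gt0 Hx)).
by apply: Hinj => //; rewrite mem_tin_dvert ?Hnxt eqxx ?Hx ?Hy.
Qed.

Lemma rooted_unique (x y : dT X) : rooted x -> dlev y = dlev x -> y = x.
Proof.
elim/dobj_down_ind: x y => [x Hx|x Hx IH] y Hroot Hxy.
  by apply: dtop_unique; rewrite ?Hxy.
have Hy : (dlev y < dn X)%N by rewrite Hxy.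
have Hnxt : dnxt y = dnxt x.
  by apply: IH; [exact: rooted_dnxt | exact: dlev_dnxt_eq].
apply: (omap_sibling_inj Hx Hy Hnxt).
have Hmem (z : dT X) : (dlev z < dn X)%N -> dnxt z = dnxt x ->
    g z \in g @: @tin (tau X) (dvert (dlev_dnxt_gt0 Hx)).
  by move=> Hz Hz'; rewrite imset_f // mem_tin_dvert Hz Hz' eqxx.
have Hgx := Hmem x Hx erefl; have Hgy := Hmem y Hy Hnxt.
case: (omap_image (dvert (dlev_dnxt_gt0 Hx))) => [Himg|[_ Himg]];
  rewrite Himg !inE in Hgx Hgy; first by rewrite (eqP Hgx) (eqP Hgy).
by have := shallow_root hE Hroot; lia.
Qed.

Lemma omap_level_inj (x y : dT X) : dlev y = dlev x -> g y = g x -> y = x.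
Proof.
elim/dobj_down_ind: x y => [x Hx|x Hx IH] y Hxy Hgxy.
  by apply: dtop_unique; rewrite ?Hxy.
have Hy : (dlev y < dn X)%N by rewrite Hxy.
apply: (omap_sibling_inj Hx Hy _ Hgxy).
have [Hrx|Hrx] := boolP (rooted (dnxt x)).
  by apply: rooted_unique Hrx _; exact: dlev_dnxt_eq.
have [Hry|Hry] := boolP (rooted (dnxt y)).
  by symmetry; apply: rooted_unique Hry _; apply: dlev_dnxt_eq; rewrite -?Hxy.
have [Hgx|[]] := omap_dnxt Hx; last by rewrite (negbTE Hrx).
have [Hgy|[]] := omap_dnxt Hy; last by rewrite (negbTE Hry).
by apply: IH; [exact: dlev_dnxt_eq | rewrite Hgx Hgy].
Qed.

Lemma omap_descent (i : nat) (y : dT E) :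
  nat_of_ord (dlev y) = 0%N -> (forall w, nat_of_ord (dlev w) = i -> ~~ rooted w) ->
  forall m (z : dT X), nat_of_ord (dlev z) = (i + m)%N -> g z = y \/ rooted z ->
  exists x, [/\ nat_of_ord (dlev x) = i, g x = y & dmap m x = z].
Proof.
move=> Hy Hunrooted; elim=> [|m IH] z Hz Hgz.
  exists z; split; rewrite ?Hz ?addn0 //.
  by case: Hgz => // Hr; have := Hunrooted z; rewrite Hz addn0 Hr => /(_ erefl).
have Hz0 : (0 < dlev z)%N by rewrite Hz addnS.
suff [x1 Hx1 Hgx1] : exists2 x1, x1 \in @tin (tau X) (dvert Hz0) & g x1 = y \/ rooted x1.
  have [Hlt /eqP Hnxt] : (dlev x1 < dn X)%N /\ dnxt x1 == z.
    by apply/andP; rewrite -mem_tin_dvert.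
  have [x [Hx Hgx Hdx]] := IH x1 ltac:(have := dlev_tin Hx1; rewrite /= Hz; lia) Hgx1.
  by exists x; split; rewrite // dmapS Hdx.
case: (omap_image (dvert Hz0)) => [Himg|[Hr Himg]].
  have : g z \in g @: @tin (tau X) (dvert Hz0) by rewrite Himg inE.
  case/imsetP => x1 Hx1 Hgx1; exists x1 => //.
  by case: Hgz => [<-|Hr]; [left | right; rewrite -Hgx1].
have : y \in g @: @tin (tau X) (dvert Hz0).
  by rewrite Himg inE Hy; have := dlev_le (g z); move: Hr => /=; lia.
by case/imsetP => x1 Hx1 ->; exists x1 => //; left.
Qed.

Definition omap_phi (i : 'I_(dn X).+1) : 'I_(dn E).+1 :=
  if [exists w, (dlev w == i) && rooted w] then ord_max else ord0.

Lemma omap_phi_spec (i : 'I_(dn X).+1) :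
  (exists2 w, dlev w = i & rooted w) /\ omap_phi i = ord_max \/
  (forall w, dlev w = i -> ~~ rooted w) /\ omap_phi i = ord0.
Proof.
rewrite /omap_phi; case: existsP => [[w /andP[/eqP Hw Hr]]|Hn].
  by left; split=> //; exists w.
by right; split=> // w Hw; apply/negP => Hr; apply: Hn; exists w; rewrite Hw eqxx.
Qed.

Lemma dlev_omap (x : dT X) : dlev (g x) = omap_phi (dlev x).
Proof.
case: (omap_phi_spec (dlev x)) => [[[w Hw Hr] ->]|[Hunrooted ->]].
  by rewrite (rooted_unique Hr (esym Hw)); apply: val_inj; rewrite /= shallow_root.
by apply: val_inj; apply/eqP; rewrite /= -leqn0 leqNgt Hunrooted.
Qed.

Lemma omap_is_dmorph : is_dmorph omap_phi g.
Proof.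
split.
- move=> i j Hij; case: (omap_phi_spec i) => [[[w Hw Hr] ->]|[_ ->]] //.
  have Hwj : (dlev w <= j)%N by rewrite Hw.
  rewrite -(dlev_dmap_sub Hwj) -dlev_omap /= shallow_root //.
  by apply: rooted_dmap => //; have := ltn_ord j; lia.
- exact: dlev_omap.
- by move=> x y Hxy Hgxy; symmetry; apply: omap_level_inj.
- move=> x j Hxj; have Hm : (dlev x + (j - dlev x) <= dn X)%N by have := ltn_ord j; lia.
  set z := dmap (j - dlev x) x; have Hzj : dlev z = j := dlev_dmap_sub Hxj.
  rewrite -Hzj -!dlev_omap.
  have [Hr|Hr] := boolP (rooted z); first exact: shallow_dmap_root.
  by rewrite unrooted_dmap // subnn.
- move=> i j Hij y z Hy Hz Hyz.
  have Hm : (i + (j - i) <= dn X)%N by have := ltn_ord j; lia.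
  suff [x [Hx Hgx Hxz]] : exists x, [/\ dlev x = i, g x = y & dmap (j - i) x = z].
    by exists x; split=> // x' [Hx' Hgx' _]; apply: omap_level_inj; rewrite ?Hx ?Hx' ?Hgx.
  case: (omap_phi_spec i) Hy Hyz => [[[w Hw Hr] ->]|[Hunrooted ->]] Hy Hyz.
    exists w; split=> //.
      by apply: dtop_unique; [exact: shallow_root | rewrite Hy].
    symmetry; apply: rooted_unique; first by apply: rooted_dmap; rewrite // Hw.
    by apply: val_inj; rewrite Hz /= dlev_dmap Hw //; lia.
  have Hgz : g z = y \/ rooted z.
    have [Hr|Hr] := boolP (rooted z); [by right | left].
    have Hgz0 : nat_of_ord (dlev (g z)) = 0%N by move: Hr; rewrite lt0n negbK => /eqP.
    by move: Hyz; rewrite -Hz -dlev_omap Hgz0 => <-.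
  have Hzlev : nat_of_ord (dlev z) = (i + (j - i))%N by rewrite Hz; lia.
  have [x [Hx Hgx Hxz]] :=
    omap_descent (f_equal val Hy) (fun w Hw => Hunrooted w (val_inj Hw)) Hzlev Hgz.
  by exists x; split=> //; apply: val_inj.
Qed.

End OmapToShallow.

Section DHomToShallow.

Variables (X E : DObj) (hE : (dn E <= 1)%N).

Lemma dhom_is_omap (f : DHom X E) : is_omap (S := tau X) (T := tau E) (dh_eta f).
Proof.
case: f => phi eta [Hmono Hlev Hinj Hnat Hpb] /= v.
set w := val v; have Hw : (0 < dlev w)%N := valP v.
set i : 'I_(dn X).+1 := inord (dlev w).-1.
have Hi : nat_of_ord i = (dlev w).-1 by rewrite inordK //; have := ltn_ord (dlev w); lia.
have Hiw : (i <= dlev w)%N by lia.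
have Hwi : (dlev w - i = 1)%N by lia.
have Hlev_in x : x \in @tin (tau X) v -> dlev x = i.
  by move=> /dlev_tin Hx; apply: val_inj => /=; rewrite Hi -/w Hx.
have Hin x : dlev x = i -> dnxt x = w -> x \in @tin (tau X) v.
  by move=> Hx Hxw; rewrite inE Hx Hi Hxw eqxx andbT; have := dlev_le w; lia.
have Heta_in x : x \in @tin (tau X) v -> eta w = dmap (phi (dlev w) - phi i) (eta x).
  move=> Hx; have Hxi := Hlev_in x Hx.
  have Hdx : dmap (dlev w - dlev x) x = w.
    by rewrite Hxi Hwi; move: Hx; rewrite inE => /andP[_ /eqP].
  by rewrite -Hxi -Hnat ?Hdx // Hxi.
split; first by move=> x y Hx Hy; apply: Hinj; rewrite !Hlev_in.
have [Hphi|Hphi] := eqVneq (phi i) (phi (dlev w)).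
  suff -> : eta @: @tin (tau X) v = [set eta w] by apply: op_id.
  apply/setP => a; rewrite inE; apply/imsetP/eqP => [[x Hx ->]|->].
    by rewrite (Heta_in x Hx) Hphi subnn.
  have [x [[Hx Hxw Hdx] _]] := Hpb i (dlev w) Hiw (eta w) w
    ltac:(by rewrite Hlev Hphi) erefl ltac:(by rewrite -Hphi subnn).
  by exists x => //; apply: Hin; rewrite // -Hdx Hwi.
have Hphi_lt : (phi i < phi (dlev w))%N by rewrite ltn_neqAle Hphi Hmono.
have Hphi_i : nat_of_ord (phi i) = 0%N by have := ltn_ord (phi (dlev w)); lia.
have Hroot : (0 < dlev (eta w))%N by rewrite Hlev; lia.
have -> : eta @: @tin (tau X) v = [set a | (dlev a < dn E)%N].
  apply/setP => a; rewrite inE; apply/imsetP/idP => [[x Hx ->]|Ha].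
    by rewrite Hlev (Hlev_in x Hx); apply: leq_trans Hphi_lt _; rewrite -ltnS.
  have Ha_i : dlev a = phi i by apply: val_inj => /=; rewrite Hphi_i; lia.
  have [x [[Hx Hxa Hdx] _]] := Hpb i (dlev w) Hiw a w Ha_i erefl
    ltac:(by rewrite -Hlev -Ha_i -shallow_dmap_root).
  by exists x => //; apply: Hin; rewrite // -Hdx Hwi.
exact: op_shallow_leaves hE (exist _ (eta w) Hroot).
Qed.

Lemma dhom_phi_inhabited (f : DHom X E) (i : 'I_(dn X).+1) :
  dh_phi f i != ord0 -> exists x : dT X, dlev x = i.
Proof.
case: f => phi eta [Hmono Hlev _ _ Hpb] /= Hi0.
have [t Ht] := dtop_exists X.
have Hit : (i <= dlev t)%N by rewrite Ht -ltnS.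
have Hphi : phi i = phi (dlev t).
  apply: val_inj; have := Hmono _ _ Hit; have := ltn_ord (phi (dlev t)).
  by move: Hi0; rewrite -(inj_eq val_inj) /=; lia.
have [x [[Hx _ _] _]] := Hpb i (dlev t) Hit (eta t) t
  ltac:(by rewrite Hlev Hphi) erefl ltac:(by rewrite Hphi subnn).
by exists x.
Qed.

Lemma dhom_eq (f1 f2 : DHom X E) : dh_eta f1 =1 dh_eta f2 -> f1 = f2.
Proof.
move=> Heta; have Ephi : dh_phi f1 =1 dh_phi f2.
  move=> i; case: (pickP [pred x : dT X | dlev x == i]) => [x /eqP <-|Hempty].
    by have [_ H1 _ _ _] := dh_ok f1; have [_ H2 _ _ _] := dh_ok f2; rewrite -H1 -H2 Heta.
  have Hphi0 (f : DHom X E) : dh_phi f i = ord0.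
    apply/eqP; apply: contraT => /dhom_phi_inhabited [x Hx].
    by have := Hempty x; rewrite /= Hx eqxx.
  by rewrite !Hphi0.
case: f1 f2 Ephi Heta => phi1 eta1 ok1 [phi2 eta2 ok2] /= Ephi Heta.
move: (functional_extensionality _ _ Ephi) (functional_extensionality _ _ Heta) ok2.
by move=> <- <- ok2; rewrite (proof_irrelevance _ ok1 ok2).
Qed.

End DHomToShallow.

Theorem unit_component_bijective_shallow (E : DObj) :
  (dn E <= 1)%N -> forall X : DObj, unit_component_bijective X E.
Proof.
move=> hE X; split=> [f|g]; first exact: (dhom_is_omap hE f).
exists (Build_DHom (omap_is_dmorph hE (oh_ok g))); split=> // f Hf.
by apply: (dhom_eq hE) => x; rewrite Hf.
Qed.

Theorem lemma4p6 :
  forall E : DObj, elementary E ->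
  forall X : DObj, unit_component_bijective X E.
Proof. by move=> E [|k]; apply: unit_component_bijective_shallow. Qed.
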